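(* Let $Z$ be a reflection positive volume-dependent field theory, let $\Sigma$ be a nonempty closed $(n-1)$-manifold, and for each $\lambda\in\mathrm{Spec}(H_\Sigma)$ let $g_\lambda:\mathcal H^\lambda_\Sigma\to\mathbb C$ be linear. If $g=\sum_{\lambda\in\mathrm{Spec}(H_\Sigma)}g_\lambda\circ\pi_\lambda$ defines a continuous map $\check E_\Sigma\to\mathbb C$, then for all $t>0$ there exists $C>0$ such that $\|g_\lambda\|<Ce^{t\lambda}$ for all $\lambda\in\mathrm{Spec}(H_\Sigma)$.
   Context: A reflection positive volume-dependent field theory $Z$ (a nuclear, holomorphic, coherent symmetric monoidal functor from $n$-dimensional bordisms of germs equipped with complex densities of positive real part to nuclear pairs — continuous injective dense maps from nuclear dual Fréchet to nuclear Fréchet spaces — which is equivariant for reflection/conjugation and sends reflection-fixed objects to Hermitian nuclear pairs) assigns to each closed $(n-1)$-manifold $\Sigma$ (using a fixed translation-invariant density $\nu_\Sigma\wedge dt$ on $\Sigma\times\mathbb R$, $\nu_\Sigma$ positive of volume 1) a Hilbert space $\mathcal H_\Sigma$ and a self-adjoint operator $H_\Sigma$ with discrete spectrum bounded below and finite-dimensional eigenspaces $\mathcal H_\Sigma^\lambda$, such that cylinders $\Sigma\times I$ of complex volume $s$ act by $\exp(-sH_\Sigma)$. The Hermitian nuclear pair assigned to $\Sigma$ is $\check E_\Sigma\subset\mathcal H_\Sigma\subset\hat E_\Sigma$ with $\check E_\Sigma=\{(v_\lambda)\in\prod_{\lambda}\mathcal H^\lambda_\Sigma:\exists\tau\in\mathbb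 C_{>0},\ (e^{\tau\lambda}v_\lambda)\in\mathcal H_\Sigma\}$, carrying the colimit topology of copies of $\mathcal H_\Sigma$ under the maps $e^{-\tau H_\Sigma}$. $\pi_\lambda:\mathcal H_\Sigma\to\mathcal H^\lambda_\Sigma$ is the orthogonal projection (extended componentwise to families). *)

From HB Require Import structures.
From mathcomp Require Import all_boot all_order all_algebra.
From mathcomp Require Import all_classical all_reals all_analysis.
From mathcomp Require Import complex.
Set Implicit Arguments. Unset Strict Implicit. Unset Printing Implicit Defensive.
Import Order.TTheory GRing.Theory Num.Theory.
Local Open Scope classical_set_scope.
Local Open Scope ring_scope.

Section SpectralData.
Variable R : realType.

Definition cabs (z : R[i]) : R := Num.sqrt (complex.Re z ^+ 2 + complex.Im z ^+ 2).

Definition cexp (z : R[i]) : R[i] :=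
  (Complex (expR (complex.Re z)) 0) * Complex (cos (complex.Im z)) (sin (complex.Im z)).

(* squared Hermitian norm on C^d (the eigenspace H^lambda, identified
   isometrically with C^d, d its dimension) *)
Definition vnorm2 (d : nat) (v : 'cV[R[i]]_d) : R :=
  \sum_(j < d) cabs (v j ord0) ^+ 2.
Definition vnorm (d : nat) (v : 'cV[R[i]]_d) : R := Num.sqrt (vnorm2 v).

Definition opnorm (d : nat) (f : 'cV[R[i]]_d -> R[i]) : R :=
  sup [set cabs (f v) | v in [set v : 'cV[R[i]]_d | vnorm v <= 1]].

Variables (I : choiceType) (lam : I -> R) (d : I -> nat).

Definition fam := forall i : I, 'cV[R[i]]_(d i).

Definition hnorm2 (v : fam) : \bar R := \esum_(i in [set: I]) ((vnorm2 (v i))%:E).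

(* the Hilbert space H_Sigma = completed direct sum of the eigenspaces *)
Definition inH (v : fam) : Prop := (hnorm2 v < +oo)%E.

Definition hsub (v w : fam) : fam := fun i => v i - w i.

Definition H_open (U : set fam) : Prop :=
  U `<=` inH /\
  forall v, U v -> exists2 e : R, 0 < e &
    forall w, inH w -> (hnorm2 (hsub w v) < (e ^+ 2)%:E)%E -> U w.

Definition expH (s : R[i]) (v : fam) : fam :=
  fun i => cexp (- (s * Complex (lam i) 0)) *: v i.

Definition inEc (v : fam) : Prop :=
  exists2 tau : R[i], 0 < complex.Re tau &
    inH (fun i => cexp (tau * Complex (lam i) 0) *: v i).

(* open subsets of check E_Sigma for the colimit (final) topology of the
   maps exp(-tau H_Sigma) : H_Sigma -> check E_Sigma, Re tau > 0 *)
Definition Ec_open (U : set fam) : Prop :=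
  U `<=` inEc /\
  forall tau : R[i], 0 < complex.Re tau ->
    H_open [set v | inH v /\ U (expH tau v)].

Definition C_open (V : set R[i]) : Prop :=
  forall z, V z -> exists2 e : R, 0 < e & forall w, cabs (w - z) < e -> V w.

Definition Ec_continuous (G : fam -> R[i]) : Prop :=
  forall V, C_open V -> Ec_open [set v | inEc v /\ V (G v)].

Definition psum (g : forall i : I, 'cV[R[i]]_(d i) -> R[i]) (v : fam) (c : R) : R[i] :=
  \sum_(i \in [set i | lam i <= c]) g i (v i).

End SpectralData.

From mathcomp Require Import all_boot all_order all_algebra.
From mathcomp Require Import all_classical all_reals all_analysis.
From mathcomp Require Import complex.
From mathcomp.algebra_tactics Require Import lra.
Import Order.TTheory GRing.Theory Num.Theory.
Local Open Scope classical_set_scope.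
Local Open Scope ring_scope.

(* By definition of the colimit topology, G o exp(-tH) is continuous on H, so
   continuity at 0 gives a radius e with |G(exp(-tH) w)| < 1 whenever
   |w|_H < e.  Test this on w = (e/2) v placed in the single eigenspace
   H^lambda, with |v| <= 1: the series defining G then has only one nonzero
   term, so the inequality reads exp(-t lambda) (e/2) |g_lambda(v)| < 1,
   i.e. |g_lambda| <= (2/e) exp(t lambda). *)

Section ComplexModulus.
Context {R : realType}.
Implicit Types (a b z : R[i]) (r : R).

Lemma cabsE z : (cabs z)%:C%C = `|z|.
Proof. by rewrite normc_def. Qed.

Lemma cabs_ge0 z : 0 <= cabs z.
Proof. exact: sqrtr_ge0. Qed.

Lemma cabs_eq0 z : (cabs z == 0) = (z == 0).
Proof. by rewrite -(inj_eq (@complexI _)) cabsE normr_eq0. Qed.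

Lemma cabs0 : cabs (0 : R[i]) = 0.
Proof. by apply/eqP; rewrite cabs_eq0. Qed.

Lemma cabsM a b : cabs (a * b) = cabs a * cabs b.
Proof. by apply: complexI; rewrite rmorphM /= !cabsE normrM. Qed.

Lemma cabsD a b : cabs (a + b) <= cabs a + cabs b.
Proof. by rewrite -lecR rmorphD /= !cabsE ler_normD. Qed.

Lemma cabs_real r : cabs r%:C%C = `|r|.
Proof. by rewrite /cabs /= expr0n /= addr0 sqrtr_sqr. Qed.

Lemma cexp_real r : cexp r%:C%C = (expR r)%:C%C.
Proof.
rewrite /cexp /= cos0 sin0; apply/eqP; rewrite eq_complex /=.
by rewrite !mulr0 mulr1 subr0 mul0r addr0 !eqxx.
Qed.

Lemma C_open_ball z r : C_open [set w | cabs (w - z) < r].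
Proof.
move=> w /= wz; exists (r - cabs (w - z)); first by rewrite subr_gt0.
move=> u /=; have := cabsD (u - w) (w - z).
rewrite addrA subrK; lra.
Qed.

Lemma eventually_const_lim (f : R -> R[i]) l z :
  (forall e, 0 < e -> exists c0, forall c, c0 <= c -> cabs (f c - l) < e) ->
  (exists c1, forall c, c1 <= c -> f c = z) -> l = z.
Proof.
move=> f_lim [c1 f_const]; apply/esym/eqP; rewrite -subr_eq0 -cabs_eq0.
rewrite eq_le cabs_ge0 andbT leNgt; apply/negP => zl_gt0.
have [c0 f_near] := f_lim _ zl_gt0.
have := f_near (Num.max c0 c1); rewrite f_const; last by rewrite le_max lexx orbT.
by rewrite le_max lexx ltxx => /(_ isT).
Qed.

End ComplexModulus.

Section SingleEigenspace.
Context {R : realType} {I : choiceType} {d : I -> nat}.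

Definition fam0 : fam R d := fun=> 0.

Definition fam_single (i : I) (u : 'cV[R[i]]_(d i)) : fam R d :=
  fun j => if i =P j is ReflectT e then ecast k 'cV[R[i]]_(d k) e u else 0.

Lemma fam_single_id i u : fam_single i u i = u.
Proof. by rewrite /fam_single; case: eqP => // e; rewrite eq_axiomK. Qed.

Lemma fam_single_neq i u j : j != i -> fam_single i u j = 0.
Proof. by move=> /eqP ji; rewrite /fam_single; case: eqP => // e; case: ji. Qed.

Lemma vnorm2_ge0 {n} (v : 'cV[R[i]]_n) : 0 <= vnorm2 v.
Proof. by apply: sumr_ge0 => j _; apply: sqr_ge0. Qed.

Lemma vnorm2_scale {n} (r : R) (v : 'cV[R[i]]_n) :
  vnorm2 (r%:C%C *: v) = r ^+ 2 * vnorm2 v.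
Proof.
rewrite /vnorm2 mulr_sumr; apply: eq_bigr => j _.
by rewrite mxE cabsM cabs_real exprMn real_normK ?num_real.
Qed.

Lemma vnorm2_0 {n} : vnorm2 (0 : 'cV[R[i]]_n) = 0.
Proof. by rewrite /vnorm2 big1 // => j _; rewrite mxE cabs0 expr0n. Qed.

Lemma vnorm2_le1 {n} (v : 'cV[R[i]]_n) : vnorm v <= 1 -> vnorm2 v <= 1.
Proof.
by move=> v1; rewrite -(sqr_sqrtr (vnorm2_ge0 v)) exprn_ile1 ?sqrtr_ge0.
Qed.

Lemma hnorm2_single i u : hnorm2 (fam_single i u) = (vnorm2 u)%:E.
Proof.
rewrite /hnorm2 (esumID [set i]) => [|j _]; last by rewrite lee_fin vnorm2_ge0.
rewrite setTI esum_set1 ?fam_single_id ?lee_fin ?vnorm2_ge0 //.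
rewrite esum1 ?adde0 // => j [_ /eqP ji].
by rewrite fam_single_neq ?vnorm2_0.
Qed.

Lemma inH_single i u : inH (fam_single i u).
Proof. by rewrite /inH hnorm2_single ltry. Qed.

Lemma inH_fam0 : inH fam0.
Proof. by rewrite /inH /hnorm2 esum1 ?ltry // => j _; rewrite vnorm2_0. Qed.

Lemma hsubr0 (v : fam R d) : hsub v fam0 = v.
Proof. by apply: functional_extensionality_dep => j; rewrite /hsub subr0. Qed.

Variable lam : I -> R.

Lemma expH_fam0 s : expH lam s fam0 = fam0.
Proof. by apply: functional_extensionality_dep => j; rewrite /expH scaler0. Qed.

Lemma expH_single s i u :
  expH lam s (fam_single i u) = fam_single i (cexp (- (s * (lam i)%:C%C)) *: u).
Proof.
apply: functional_extensionality_dep => j; rewrite /expH.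
have [->|ji] := eqVneq j i; first by rewrite !fam_single_id.
by rewrite !fam_single_neq ?scaler0.
Qed.

Lemma inEc_fam0 : inEc lam fam0.
Proof.
exists 1; first by rewrite ltr01.
have -> : (fun j => cexp (1 * (lam j)%:C%C) *: fam0 j) = fam0.
  by apply: functional_extensionality_dep => j; rewrite scaler0.
exact: inH_fam0.
Qed.

End SingleEigenspace.
Arguments fam0 {R I d}.

Lemma opnorm_le (R : realType) n (f : 'cV[R[i]]_n -> R[i]) (B : R) :
  (forall v, vnorm v <= 1 -> cabs (f v) <= B) -> opnorm f <= B.
Proof.
move=> f_le; apply: ge_sup; last by move=> _ [v v1 <-]; exact: f_le.
by exists (cabs (f 0)), 0 => //; rewrite /= /vnorm vnorm2_0 sqrtr0.
Qed.

Section SpectralSum.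
Context {R : realType} {I : choiceType} {lam : I -> R} {d : I -> nat}.
Context {g : forall i : I, 'cV[R[i]]_(d i) -> R[i]}.
Hypothesis g_lin : forall i (a : R[i]) (u v : 'cV[R[i]]_(d i)),
  g i (a *: u + v) = a * g i u + g i v.

Lemma g0 i : g i 0 = 0.
Proof.
have := g_lin i 1 0 0; rewrite scaler0 addr0 mul1r.
by move/eqP; rewrite -subr_eq subrr eq_sym => /eqP.
Qed.

Lemma gZ i a u : g i (a *: u) = a * g i u.
Proof. by rewrite -[a *: u]addr0 g_lin g0 addr0. Qed.

Lemma psum_fam0 c : psum lam g fam0 c = 0.
Proof. by rewrite /psum fsbig1 // => j _; rewrite g0. Qed.

Lemma psum_single i u c : lam i <= c -> psum lam g (fam_single i u) c = g i u.
Proof.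
move=> lam_le; rewrite /psum -(fsbig_widen [set i]) ?fsbig_set1 ?fam_single_id //.
  by move=> j /= ->.
by move=> j [/= _ /eqP ji]; rewrite fam_single_neq ?g0.
Qed.

Context {G : fam R d -> R[i]}.
Hypothesis G_sum : forall v : fam R d, inEc lam v ->
  forall e : R, 0 < e -> exists c0 : R, forall c : R, c0 <= c ->
    cabs (psum lam g v c - G v) < e.

Lemma G_fam0 : G fam0 = 0.
Proof.
apply: eventually_const_lim (G_sum _ (inEc_fam0 lam)) _.
by exists 0 => c _; exact: psum_fam0.
Qed.

Lemma G_single i u : inEc lam (fam_single i u) -> G (fam_single i u) = g i u.
Proof.
move=> u_Ec; apply: eventually_const_lim (G_sum _ u_Ec) _.
by exists (lam i); exact: psum_single.
Qed.

End SpectralSum.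

Lemma Ec_continuous_ball {R : realType} {I : choiceType} {lam : I -> R} {d : I -> nat}
    (G : fam R d -> R[i]) (v0 : fam R d) (tau : R[i]) (eps : R) :
  Ec_continuous lam G -> 0 < complex.Re tau -> 0 < eps ->
  inH v0 -> inEc lam (expH lam tau v0) ->
  exists2 e : R, 0 < e & forall w, inH w -> (hnorm2 (hsub w v0) < (e ^+ 2)%:E)%E ->
    inEc lam (expH lam tau w) /\
    cabs (G (expH lam tau w) - G (expH lam tau v0)) < eps.
Proof.
move=> G_cont tau_gt0 eps_gt0 v0_H v0_Ec.
have [_ U_open] := G_cont _ (C_open_ball (G (expH lam tau v0)) eps).
have [_ near_in_U] := U_open tau tau_gt0.
have [|e e_gt0 near_v0] := near_in_U v0.
  by split; [|split; [|rewrite /= subrr cabs0]].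
exists e; first exact: e_gt0.
by move=> w w_H w_near; case: (near_v0 w w_H w_near).
Qed.

Theorem lemma3p41 (R : realType) (I : choiceType) (lam : I -> R) (d : I -> nat)
  (lam_inj : injective lam)
  (d_pos : forall i, (0 < d i)%N)
  (spec_discrete : forall c : R, finite_set [set i | lam i <= c])
  (g : forall i : I, 'cV[R[i]]_(d i) -> R[i])
  (g_lin : forall i (a : R[i]) (u v : 'cV[R[i]]_(d i)),
      g i (a *: u + v) = a * g i u + g i v)
  (G : fam R d -> R[i])
  (G_sum : forall v : fam R d, inEc lam v ->
      forall e : R, 0 < e -> exists c0 : R, forall c : R, c0 <= c ->
        cabs (psum lam g v c - G v) < e)
  (G_cont : Ec_continuous lam G) :
  forall t : R, 0 < t -> exists2 C : R, 0 < C &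
    forall i : I, opnorm (g i) < C * expR (t * lam i).
Proof.
move=> t t_gt0.
have fam0_Ec : inEc lam (expH lam t%:C%C (fam0 : fam R d)).
  by rewrite expH_fam0; exact: inEc_fam0.
have [e e_gt0 near0] :=
  Ec_continuous_ball G fam0 t%:C%C 1 G_cont t_gt0 ltr01 inH_fam0 fam0_Ec.
exists (4 / e); first by rewrite divr_gt0.
move=> i; set E := expR (t * lam i).
have E_gt0 : 0 < E by exact: expR_gt0.
apply: (@le_lt_trans _ _ (2 / e * E)).
  apply: opnorm_le => v v_le1.
  pose w := fam_single i ((e / 2)%:C%C *: v).
  have w_near : (hnorm2 (hsub w fam0) < (e ^+ 2)%:E)%E.
    rewrite hsubr0 hnorm2_single vnorm2_scale lte_fin.
    have := vnorm2_le1 v v_le1; have := vnorm2_ge0 v; nra.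
  have [w_Ec] := near0 w (inH_single _ _) w_near.
  rewrite expH_single in w_Ec *.
  rewrite (G_single g_lin G_sum _ _ w_Ec) expH_fam0 (G_fam0 g_lin G_sum) subr0.
  rewrite !(gZ g_lin) -rmorphM -rmorphN cexp_real !cabsM !cabs_real.
  have e2_ge0 : 0 <= e / 2 by rewrite divr_ge0 // ltW.
  rewrite (ger0_norm (expR_ge0 _)) (ger0_norm e2_ge0) expRN -/E.
  rewrite ltr_pdivrMl // mulr1 => lt_E.
  by rewrite -invf_div ler_pdivlMl ?divr_gt0 // ltW.
by rewrite ltr_pM2r // ltr_pM2r ?invr_gt0 // ltr_nat.
Qed.
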